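(* Let $\bm\mu=(\mu_1,\dots,\mu_r)$ be finite positive Borel measures on the unit circle with infinite supports, fix the square-root branch as in the context, let $\bm n\in\mathbb N^r$ be $\phi$-normal for $\bm\mu$, $\tau\in\partial\mathbb D$, and let $X\not\equiv0$ be a $\tau$-invariant paraorthogonal function for $\bm n$. Suppose that for every $\varphi\in[0,2\pi)$, $\bm n$ is $\phi$-normal with respect to the system $\widehat{\bm\mu}$ given by $d\widehat\mu_j(e^{i\theta})=4\sin^2\frac{\theta-\varphi}{2}\,d\mu_j(e^{i\theta})$ $(=-e^{i\varphi}z^{-1}(z-e^{i\varphi})^2d\mu_j(z))$, $j=1,\dots,r$. Then every zero of the polynomial $z^{(|\bm n|+1)/2}X(z)$ on $\partial\mathbb D$ is simple.
   Context: $\partial\mathbb D=\{|z|=1\}$. Fix $t_0\in\mathbb R$ and let $z^{k/2}=|z|^{k/2}\exp(ik\arg_{[t_0,t_0+2\pi)}(z)/2)$, $k\in\mathbb Z$. $|\bm n|=\sum_j n_j$; $\operatorname{span}\{z^p\}_{p=a}^b$ ($b-a\in\mathbb Z$) is the span of $z^a,\dots,z^b$. For a system $\bm\nu$ of measures on $\partial\mathbb D$, $\bm n$ is $\phi$-normal w.r.t. $\bm\nu$ if there is a unique $\phi\in\operatorname{span}\{z^p\}_{p=-|\bm n|/2}^{|\bm n|/2}$ with coefficient of $z^{|\bm n|/2}$ equal to $1$ such that $\int\phi(z)z^{-p}\,d\nu_j(z)=0$ for $p=-n_j/2,\dots,n_j/2-1$, $j=1,\dots,r$. A $\tau$-invariant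 paraorthogonal function for $\bm n$ is any $X\in\operatorname{span}\{z^p\}_{p=-(|\bm n|+1)/2}^{(|\bm n|+1)/2}$ with $X(z)=\tau\overline{X(1/\bar z)}$ and $\int X(z)z^{-p}\,d\mu_j(z)=0$ for $p=-(n_j-1)/2,\dots,(n_j-1)/2$, $j=1,\dots,r$. $z^{(|\bm n|+1)/2}X(z)$ is a polynomial; zeros of $X$ mean zeros of this polynomial. *)

From HB Require Import structures.
From mathcomp Require Import all_boot all_order all_algebra.
From mathcomp Require Import all_classical all_reals all_analysis.
From mathcomp Require Import complex.

Set Implicit Arguments.
Unset Strict Implicit.
Unset Printing Implicit Defensive.

Import Order.TTheory GRing.Theory Num.Theory.
Import numFieldNormedType.Exports.

Local Open Scope classical_set_scope.
Local Open Scope ring_scope.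
Local Open Scope complex_scope.

Notation normc := ComplexField.Normc.normc.

Section Defs.
Variable R : realType.

Definition expiC (theta : R) : R[i] := cos theta +i* sin theta.

Definition argI (t0 : R) : set R := `[t0, t0 + 2 * pi[%classic.

(* arg_{[t0, t0 + 2 pi)} z : the unique theta in [t0, t0+2pi) with
   z = |z| e^{i theta}  (for z <> 0; junk value t0 for z = 0). *)
Definition argb (t0 : R) (z : R[i]) : R :=
  xget t0 [set theta | argI t0 theta /\ z = (normc z)%:C * expiC theta].

(* z^{m/2} = |z|^{m/2} exp(i m arg_{[t0,t0+2pi)}(z) / 2), m : int *)
Definition hpow (t0 : R) (m : int) (z : R[i]) : R[i] :=
  ((Num.sqrt (normc z)) ^ m)%:C * expiC (m%:~R * argb t0 z / 2).

(* the element sum_{k=0}^{M} c_k z^{(2k - M)/2} of span{z^p}_{p=-M/2}^{M/2} *)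
Definition spanfun (t0 : R) (M : nat) (c : 'I_M.+1 -> R[i]) (z : R[i]) : R[i] :=
  \sum_(k < M.+1) c k * hpow t0 ((2 * k)%:Z - M%:Z) z.

Definition cint (mu : {measure set R -> \bar R}) (D : set R) (f : R -> R[i])
  : R[i] :=
  (Rintegral mu D (fun x => complex.Re (f x))) +i* (Rintegral mu D (fun x => complex.Im (f x))).

(* A measure on the unit circle is represented by a measure on the angle
   line R concentrated on the branch interval [t0, t0+2pi) (via
   theta |-> e^{i theta}); integrals over the circle are integrals over
   [t0, t0+2pi) of the integrand evaluated at e^{i theta}. *)
Definition circ_integral (t0 : R) (mu : {measure set R -> \bar R})
  (f : R[i] -> R[i]) : R[i] :=
  cint mu (argI t0) (fun theta => f (expiC theta)).

Definition circle_measure (t0 : R) (mu : {measure set R -> \bar R}) : Prop :=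
  mu (~` argI t0) = 0%E.

Definition finite_meas (mu : {measure set R -> \bar R}) : Prop :=
  (mu setT < +oo)%E.

Definition infinite_support (t0 : R) (mu : {measure set R -> \bar R}) : Prop :=
  forall F : set R, finite_set F -> (0 < mu (argI t0 `\` F))%E.

Definition totn (r : nat) (n : 'I_r -> nat) : nat := (\sum_(j < r) n j)%N.

(* phi satisfies the orthogonality conditions for n w.r.t. nu:
   int phi(z) z^{-p} dnu_j = 0 for p = -n_j/2, ..., n_j/2 - 1,
   i.e. p = (2l - n_j)/2, l = 0..n_j-1, so -p = (n_j - 2l)/2. *)
Definition phi_conditions (t0 : R) (r : nat) (nu : 'I_r -> {measure set R -> \bar R})
  (n : 'I_r -> nat) (c : 'I_(totn n).+1 -> R[i]) : Prop :=
  c ord_max = 1 /\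
  forall (j : 'I_r) (l : 'I_(n j)),
    circ_integral t0 (nu j)
      (fun z => spanfun t0 c z * hpow t0 ((n j)%:Z - (2 * l)%:Z) z) = 0.

Definition phi_normal (t0 : R) (r : nat) (nu : 'I_r -> {measure set R -> \bar R})
  (n : 'I_r -> nat) : Prop :=
  exists c, @phi_conditions t0 r nu n c /\
    forall c', @phi_conditions t0 r nu n c' -> forall k, c' k = c k.

(* d are the coefficients of X = sum_{k=0}^{|n|+1} d_k z^{(2k-|n|-1)/2}, a
   tau-invariant paraorthogonal function for n w.r.t. mu:
   orthogonality for p = -(n_j-1)/2, ..., (n_j-1)/2, i.e.
   p = (2l - n_j + 1)/2, l = 0..n_j-1, so -p = (n_j - 1 - 2l)/2. *)
Definition paraorthogonal (t0 : R) (r : nat) (mu : 'I_r -> {measure set R -> \bar R})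
  (n : 'I_r -> nat) (tau : R[i]) (d : 'I_(totn n).+2 -> R[i]) : Prop :=
  (forall z : R[i], z != 0 ->
     spanfun t0 d z = tau * conjc (spanfun t0 d (1 / conjc z))) /\
  forall (j : 'I_r) (l : 'I_(n j)),
    circ_integral t0 (mu j)
      (fun z => spanfun t0 d z * hpow t0 ((n j)%:Z - 1 - (2 * l)%:Z) z) = 0.

(* z^{(|n|+1)/2} X(z) = sum_k d_k z^k *)
Definition Xpoly (M : nat) (d : 'I_M.+2 -> R[i]) : {poly R[i]} :=
  \poly_(k < M.+2) d (inord k).

Definition hatw (varphi theta : R) : R := 4 * (sin ((theta - varphi) / 2)) ^+ 2.

End Defs.

Arguments phi_conditions {R} t0 {r} nu n c.
Arguments paraorthogonal {R} t0 {r} mu n tau d.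

From HB Require Import structures.
From mathcomp Require Import all_boot all_order all_algebra.
From mathcomp Require Import all_classical all_reals all_analysis.
From mathcomp Require Import complex measurable_realfun.
From mathcomp Require Import ring lra.
Set Implicit Arguments.
Unset Strict Implicit.
Unset Printing Implicit Defensive.
Import Order.TTheory GRing.Theory Num.Theory.
Import numFieldNormedType.Exports.
Local Open Scope classical_set_scope.
Local Open Scope ring_scope.
Local Open Scope complex_scope.

(* If e^{i phi} were a double root of P(z) = z^{(|n|+1)/2} X(z), write
   P = q (z - e^{i phi})^2 with deg q < |n| and let Y be the element of
   span{z^p}_{p=-|n|/2}^{|n|/2} with coefficients -e^{i phi} q.  On the circle
   (z - e^{i phi})^2 = -e^{i phi} z 4 sin^2((theta - phi)/2), so the moments of Y
   against the weighted measures hat-mu_j are moments of X against mu_j shifted by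
   half a step, and these vanish by paraorthogonality.  As Y has no z^{|n|/2}
   term, adding it to the phi-function of hat-mu gives another solution of the
   normality conditions; uniqueness forces Y = 0, i.e. q = 0, a contradiction. *)

Section approx_integral.
Context d (T : measurableType d) (R : realType).
Local Open Scope ereal_scope.
Import HBNNSimple.

Lemma integral_nnsfun_approxM (mu : {measure set T -> \bar R}) E (mE : measurable E)
    (f : T -> \bar R) (mf : measurable_fun E f) (k : T -> R) :
  (forall x, E x -> 0 <= f x) -> (forall x, (0 <= k x)%R) -> measurable_fun E k ->
  \int[mu]_(x in E) (f x * (k x)%:E) =
  limn (fun n => \int[mu]_(x in E) ((nnsfun_approx mE mf n x)%:E * (k x)%:E)).
Proof.
move=> f_ge0 k_ge0 mk; rewrite -monotone_convergence //.
- apply: eq_integral => x /[!inE] Ex; apply/esym/cvg_lim => //.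
  apply: cvgeZr => //; exact: (@cvg_nnsfun_approx _ _ _ E mE f mf f_ge0 x Ex).
- move=> n; apply: emeasurable_funM; apply/measurable_EFinP => //.
  exact: measurable_funTS.
- by move=> n x _; rewrite mule_ge0 ?lee_fin.
- move=> x _ m n mn; rewrite lee_wpmul2r ?lee_fin //.
  exact/lefP/nd_nnsfun_approx.
Qed.

End approx_integral.

Section integral_density.
Context d (T : measurableType d) (R : realType).
Variables (mu nu : {measure set T -> \bar R}) (h : T -> R).
Hypothesis h_ge0 : forall x, 0 <= h x.
Hypothesis measurable_h : measurable_fun setT h.
Hypothesis nuE : forall A, measurable A -> nu A = (\int[mu]_(x in A) (h x)%:E)%E.
Local Open Scope ereal_scope.
Import HBNNSimple.

Let measurable_h_E E : measurable_fun E (EFin \o h).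
Proof. by apply/measurable_EFinP; exact: measurable_funTS measurable_h. Qed.

Lemma integral_density_nnsfun (s : {nnsfun T >-> R}) E : measurable E ->
  \int[mu]_(x in E) ((s x)%:E * (h x)%:E) = \int[nu]_(x in E) (s x)%:E.
Proof.
move=> mE.
pose part y x := (y * \1_(s @^-1` [set y]) x)%:E.
have part_ge0 y x : 0 <= part y x by exact: nnfun_muleindic_ge0.
have measurable_part y : measurable_fun E (part y).
  exact/measurable_EFinP/measurable_funM.
have sE x : (s x)%:E = \sum_(y \in range s) part y x.
  by rewrite fsumEFin // -fimfunE.
under eq_integral do rewrite sE ge0_mule_fsuml //.
under [RHS]eq_integral do rewrite sE.
rewrite ge0_integral_fsum //; last 2 first.
- by move=> y; apply: emeasurable_funM.
- by move=> y x _; rewrite mule_ge0 // lee_fin.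
rewrite ge0_integral_fsum //.
apply: eq_fsbigr => _ /[!inE] -[x _ <-].
pose A := s @^-1` [set s x].
have mA : measurable A by rewrite -[A]setTI; exact: measurable_funP.
have m1A : measurable_fun E (EFin \o (\1_A : T -> R)).
  by apply/measurable_EFinP; exact: measurable_indic.
rewrite /part -/A; under eq_integral do rewrite EFinM -muleA.
under [RHS]eq_integral do rewrite EFinM.
rewrite !ge0_integralZl ?lee_fin //; last 2 first.
- exact: emeasurable_funM.
- by move=> t _; rewrite mule_ge0 // lee_fin.
rewrite integral_indic // nuE; last exact: measurableI.
rewrite setIC integral_mkcondr epatch_indic.
by congr (_ * _); apply: eq_integral => t _; rewrite muleC.
Qed.

Lemma integral_density_ge0 (f : T -> \bar R) E : measurable E -> measurable_fun E f ->
  (forall x, E x -> 0 <= f x) ->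
  \int[mu]_(x in E) (f x * (h x)%:E) = \int[nu]_(x in E) f x.
Proof.
move=> mE mf f_ge0.
transitivity (\int[nu]_(x in E) (f x * (cst 1%R x)%:E)); last first.
  by apply: eq_integral => x _; rewrite mule1.
rewrite !(integral_nnsfun_approxM _ mE mf) //; last exact: measurable_funTS.
congr (limn _); apply/funext => n.
under [RHS]eq_integral do rewrite mule1.
exact: integral_density_nnsfun.
Qed.

Lemma integral_density (f : T -> R) E : measurable E -> measurable_fun E f ->
  \int[mu]_(x in E) (f x * h x)%:E = \int[nu]_(x in E) (f x)%:E.
Proof.
move=> mE mf.
have posM x : funrpos (fun x => f x * h x)%R x = (funrpos f x * h x)%R.
  by rewrite /funrpos maxr_pMl // mul0r.
have negM x : funrneg (fun x => f x * h x)%R x = (funrneg f x * h x)%R.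
  by rewrite /funrneg maxr_pMl // mulNr mul0r.
rewrite integralE [RHS]integralE !funerpos !funerneg; congr (_ - _).
- rewrite -integral_density_ge0 //; last 2 first.
  + exact/measurable_EFinP/measurable_funrpos.
  + by move=> x _; rewrite lee_fin funrpos_ge0.
  by apply: eq_integral => x _; rewrite /= posM EFinM.
- rewrite -integral_density_ge0 //; last 2 first.
  + exact/measurable_EFinP/measurable_funrneg.
  + by move=> x _; rewrite lee_fin funrneg_ge0.
  by apply: eq_integral => x _; rewrite /= negM EFinM.
Qed.

End integral_density.

Section expiC.
Variable R : realType.
Implicit Types a b theta : R.

Lemma expiCD a b : expiC a * expiC b = expiC (a + b).
Proof. by rewrite /expiC /= cosD sinD; congr (_ +i* _); ring. Qed.

Lemma expiC0 : expiC 0 = 1 :> R[i].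
Proof. by rewrite /expiC cos0 sin0. Qed.

Lemma expiCX a (k : nat) : expiC a ^+ k = expiC (k%:R * a).
Proof.
elim: k => [|k IHk]; first by rewrite expr0 mul0r expiC0.
by rewrite exprS IHk expiCD mulrSr mulrDl mul1r addrC.
Qed.

Lemma normc_expiC a : normc (expiC a) = 1.
Proof. by rewrite /expiC /= cos2Dsin2 sqrtr1. Qed.

Lemma expiC_neq0 a : expiC a != 0.
Proof.
apply/eqP => -[cos0 sin0]; have := cos2Dsin2 a.
by rewrite cos0 sin0 expr0n /= addr0 => /esym/eqP; rewrite oner_eq0.
Qed.

Lemma cos_eq1_02pi a : 0 <= a < 2 * pi -> cos a = 1 -> a = 0.
Proof.
move=> /andP[a_ge0 a_lt2pi] cos_a.
have a_half : a = (a / 2) *+ 2 by rewrite mulr2n -splitr.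
have cos_half2 : cos (a / 2) ^+ 2 = 1.
  by have := cos_a; rewrite {1}a_half cos_mulr2n -mulr_natr; lra.
have sin_half : sin (a / 2) = 0.
  by apply/eqP; rewrite -sqrf_eq0 sin2cos2 cos_half2 subrr.
have [//|a_neq0] := eqVneq a 0.
have a_gt0 : 0 < a by rewrite lt0r a_neq0.
suff : 0 < sin (a / 2) by rewrite sin_half ltxx.
by apply: sin_gt0_pi; rewrite divr_gt0 //= ltr_pdivrMr // mulrC.
Qed.

Lemma expiC_inj t0 a b : argI t0 a -> argI t0 b -> expiC a = expiC b -> a = b.
Proof.
wlog ba : a b / b <= a.
  move=> wlog_ba Ia Ib eab; have [ba|ab] := leP b a; first exact: wlog_ba.
  by apply/esym/(wlog_ba b a (ltW ab)).
rewrite /argI /= !in_itv /= => /andP[a1 a2] /andP[b1 b2] [cos_ab sin_ab].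
apply/eqP; rewrite -subr_eq0; apply/eqP/cos_eq1_02pi.
  by rewrite subr_ge0 ba /= ltrBlDr; lra.
by rewrite cosB cos_ab sin_ab -!expr2 cos2Dsin2.
Qed.

Lemma argb_expiC t0 theta : argI t0 theta -> argb t0 (expiC theta) = theta.
Proof.
move=> I_theta; rewrite /argb.
have P_theta :
    [set t | argI t0 t /\ expiC theta = (normc (expiC theta))%:C * expiC t] theta.
  by split; rewrite // normc_expiC mul1r.
have [I_arg eq_arg] := xgetI t0 P_theta.
by apply: (expiC_inj I_arg I_theta); rewrite [RHS]eq_arg normc_expiC mul1r.
Qed.

Lemma hpow_expiC t0 (m : int) theta : argI t0 theta ->
  hpow t0 m (expiC theta) = expiC (m%:~R * theta / 2).
Proof.
by move=> I_theta; rewrite /hpow argb_expiC // normc_expiC sqrtr1 exp1rz mul1r.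
Qed.

Lemma expiC_onto (z : R[i]) : normc z = 1 ->
  exists2 phi, 0 <= phi < 2 * pi & expiC phi = z.
Proof.
case: z => a b /= ab1.
have ab2 : a ^+ 2 + b ^+ 2 = 1.
  by rewrite -[LHS]sqr_sqrtr ?ab1 ?expr1n // addr_ge0 // sqr_ge0.
have a_11 : -1 <= a <= 1 by apply/andP; split; nra.
have sin_acos : sin (acos a) = `|b|.
  by rewrite sin_acos // -ab2 addrAC subrr add0r sqrtr_sqr.
have acos_pi := acos_lepi a_11.
have pi_gt0 : 0 < pi :> R by exact: pi_gt0.
have [b_ge0|b_lt0] := leP 0 b.
  exists (acos a); last by rewrite /expiC acosK ?in_itv //= sin_acos ger0_norm.
  by rewrite acos_ge0 //=; lra.
exists (2 * pi - acos a).
  suff : 0 < acos a by lra.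
  apply: acos_gt0; rewrite (andP a_11).1 lt_neqAle (andP a_11).2 andbT /=.
  apply: contraTneq b_lt0 => a1; rewrite -leNgt.
  by move: ab2; rewrite a1; nra.
rewrite mulr_natl /expiC cosB sinB cos2pi sin2pi acosK ?in_itv //= sin_acos.
by rewrite ltr0_norm //; congr (_ +i* _); ring.
Qed.

End expiC.

Section hatmu.
Variables (R : realType) (mu : {measure set R -> \bar R}) (phi : R).

Lemma hatw_ge0 x : 0 <= hatw phi x.
Proof. by rewrite /hatw mulr_ge0 // sqr_ge0. Qed.

Lemma hatw_le4 x : hatw phi x <= 4.
Proof.
rewrite /hatw; have := sin_le1 ((x - phi) / 2); have := sin_geN1 ((x - phi) / 2).
by nra.
Qed.

Lemma measurable_hatw : measurable_fun setT (hatw phi).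
Proof.
apply: measurable_funM => //; apply: measurable_funX.
apply: measurableT_comp.
  by apply: continuous_measurable_fun; exact: continuous_sin.
by apply: measurable_funM => //; exact: measurable_funB.
Qed.

Definition hatmu (A : set R) : \bar R := (\int[mu]_(x in A) (hatw phi x)%:E)%E.

Let hatmu0 : hatmu set0 = 0%E.
Proof. exact: integral_set0. Qed.

Let hatmu_ge0 A : (0 <= hatmu A)%E.
Proof. by apply: integral_ge0 => x _; rewrite lee_fin hatw_ge0. Qed.

Let hatmu_sigma_additive : semi_sigma_additive hatmu.
Proof.
apply: semi_sigma_additive_nng_induced => [|x]; last by rewrite lee_fin hatw_ge0.
by apply/measurable_EFinP; exact: measurable_hatw.
Qed.

HB.instance Definition _ :=
  isMeasure.Build _ _ _ hatmu hatmu0 hatmu_ge0 hatmu_sigma_additive.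

Lemma hatmu_le A : measurable A -> (hatmu A <= 4%:E * mu A)%E.
Proof.
move=> mA; rewrite -integral_cst //; apply: ge0_le_integral => //.
- by move=> x _; rewrite lee_fin hatw_ge0.
- by apply/measurable_funTS/measurable_EFinP; exact: measurable_hatw.
- by move=> x _; rewrite lee_fin hatw_le4.
Qed.

Lemma hatmu_lt_pinfty A : finite_meas mu -> measurable A -> (hatmu A < +oo)%E.
Proof.
move=> mu_fin mA; apply: le_lt_trans (hatmu_le mA) _.
by rewrite lte_mul_pinfty // (le_lt_trans _ mu_fin) // le_measure ?inE.
Qed.

End hatmu.

Section trigsum.
Variable R : realType.

Definition trigsum N (c : 'I_N -> R[i]) (e : 'I_N -> R) (t : R) : R[i] :=
  \sum_(k < N) c k * expiC (e k * t).

Lemma Re_trigsum N c e t : complex.Re (@trigsum N c e t) =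
  \sum_(k < N) (complex.Re (c k) * cos (e k * t) - complex.Im (c k) * sin (e k * t)).
Proof.
rewrite (raddf_sum (@complex.Re R : Rcomplex R -> R)).
by apply: eq_bigr => k _; case: (c k).
Qed.

Lemma Im_trigsum N c e t :
  complex.Im (@trigsum N c e t) = complex.Re (trigsum (fun k => c k * - 'i) e t).
Proof.
rewrite /trigsum; under [in RHS]eq_bigr do rewrite mulrAC.
by rewrite -mulr_suml; case: (\sum_(k < N) _) => a b /=; ring.
Qed.

Lemma measurable_Re_trigsum N c e D :
  measurable_fun D (fun t => complex.Re (@trigsum N c e t)).
Proof.
have measurable_cosM a : measurable_fun setT (fun t : R => cos (a * t)).
  apply: measurableT_comp => //.
  by apply: continuous_measurable_fun; exact: continuous_cos.
have measurable_sinM a : measurable_fun setT (fun t : R => sin (a * t)).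
  apply: measurableT_comp => //.
  by apply: continuous_measurable_fun; exact: continuous_sin.
under eq_fun do rewrite Re_trigsum.
apply: measurable_sum => k; apply: measurable_funTS.
by apply: measurable_funB; apply: measurable_funM.
Qed.

Lemma norm_Re_trigsum_le N c e t : `|complex.Re (@trigsum N c e t)| <=
  \sum_(k < N) (`|complex.Re (c k)| + `|complex.Im (c k)|).
Proof.
rewrite Re_trigsum; apply: le_trans (ler_norm_sum _ _ _) _; apply: ler_sum => k _.
apply: le_trans (ler_normB _ _) _; rewrite !normrM.
by apply: lerD; rewrite -[leRHS]mulr1 ler_wpM2l // ?cos_max ?sin_max.
Qed.

Lemma integrable_Re_trigsum (mu : {measure set R -> \bar R}) D N c e :
  measurable D -> (mu D < +oo)%E ->
  mu.-integrable D (EFin \o (fun t => complex.Re (@trigsum N c e t))).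
Proof.
move=> mD muD; apply: measurable_bounded_integrable => //.
  exact: measurable_Re_trigsum.
exists (\sum_(k < N) (`|complex.Re (c k)| + `|complex.Im (c k)|)).
split; first exact: num_real.
move=> B B_gt x _; apply: le_trans (ltW B_gt).
exact: norm_Re_trigsum_le.
Qed.

End trigsum.

Section cint.
Variable R : realType.
Implicit Types (mu nu : {measure set R -> \bar R}) (D : set R) (F G : R -> R[i]).

Definition cintegrable mu D F :=
  mu.-integrable D (EFin \o (fun t => complex.Re (F t))) /\
  mu.-integrable D (EFin \o (fun t => complex.Im (F t))).

Lemma eq_cint mu D F G : {in D, F =1 G} -> cint mu D F = cint mu D G.
Proof.
by move=> FG; rewrite /cint; congr (_ +i* _); apply: eq_Rintegral => x /FG ->.
Qed.

Lemma cintD mu D F G : measurable D -> cintegrable mu D F -> cintegrable mu D G ->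
  cint mu D (F \+ G) = cint mu D F + cint mu D G.
Proof.
move=> mD [iReF iImF] [iReG iImG]; rewrite /cint.
under eq_Rintegral do rewrite /= (raddfD (@complex.Re R : Rcomplex R -> R)).
under [X in _ +i* X]eq_Rintegral
  do rewrite /= (raddfD (@complex.Im R : Rcomplex R -> R)).
by rewrite !RintegralD.
Qed.

Lemma cintegrable_trigsum mu D N c e : measurable D -> (mu D < +oo)%E ->
  cintegrable mu D (@trigsum R N c e).
Proof.
move=> mD muD; split; first exact: integrable_Re_trigsum.
under eq_fun do rewrite Im_trigsum.
exact: integrable_Re_trigsum.
Qed.

Lemma cint_density mu nu (h : R -> R) D F :
  (forall x, 0 <= h x) -> measurable_fun setT h ->
  (forall A, measurable A -> nu A = (\int[mu]_(x in A) (h x)%:E)%E) ->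
  measurable D -> measurable_fun D (fun t => complex.Re (F t)) ->
  measurable_fun D (fun t => complex.Im (F t)) ->
  cint nu D F = cint mu D (fun t => F t * (h t)%:C).
Proof.
move=> h_ge0 mh nuE mD mReF mImF; rewrite /cint /Rintegral.
rewrite -!(integral_density h_ge0 mh nuE) //.
by congr (fine _ +i* fine _); apply: eq_integral => x _; case: (F x) => a b /=;
  congr EFin; ring.
Qed.

End cint.

Section spanfun_on_circle.
Variables (R : realType) (t0 : R).

Lemma spanfunD K (c1 c2 : 'I_K.+1 -> R[i]) z :
  spanfun t0 (fun k => c1 k + c2 k) z = spanfun t0 c1 z + spanfun t0 c2 z.
Proof. by rewrite /spanfun -big_split; apply: eq_bigr => k _; rewrite mulrDl. Qed.

Lemma spanfun_hpow_expiC K (c : 'I_K.+1 -> R[i]) (m : int) t : argI t0 t ->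
  spanfun t0 c (expiC t) * hpow t0 m (expiC t) =
  trigsum c (fun k => (k : nat)%:R + (m - K%:Z)%:~R / 2) t.
Proof.
move=> It; rewrite /spanfun /trigsum mulr_suml; apply: eq_bigr => k _.
rewrite !hpow_expiC // -mulrA expiCD; congr (_ * expiC _).
by rewrite !intrD !intrN -!pmulrn natrM; field.
Qed.

Lemma trigsum_shift N (c : 'I_N -> R[i]) b t :
  trigsum c (fun k => (k : nat)%:R + b) t =
  expiC (b * t) * \sum_(k < N) c k * expiC t ^+ k.
Proof.
rewrite /trigsum mulr_sumr; apply: eq_bigr => k _.
by rewrite expiCX mulrCA expiCD mulrDl addrC.
Qed.

Lemma circ_integral_spanfun_hpowD (nu : {measure set R -> \bar R}) K
    (c1 c2 : 'I_K.+1 -> R[i]) (m : int) :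
  (nu (argI t0) < +oo)%E ->
  circ_integral t0 nu (fun z => spanfun t0 (fun k => c1 k + c2 k) z * hpow t0 m z) =
  circ_integral t0 nu (fun z => spanfun t0 c1 z * hpow t0 m z) +
  circ_integral t0 nu (fun z => spanfun t0 c2 z * hpow t0 m z).
Proof.
have mI : measurable (argI t0) by exact: measurable_itv.
move=> nuI; rewrite /circ_integral.
pose e := fun k : 'I_K.+1 => (k : nat)%:R + (m - K%:Z)%:~R / 2 : R.
rewrite (@eq_cint _ _ _ _ (trigsum c1 e \+ trigsum c2 e)); last first.
  by move=> t /set_mem It; rewrite /= spanfunD mulrDl !spanfun_hpow_expiC.
rewrite cintD //; [|exact: cintegrable_trigsum..].
by congr (_ + _); apply: eq_cint => t /set_mem It; rewrite spanfun_hpow_expiC.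
Qed.

Lemma circ_integral_hatmu (mu : {measure set R -> \bar R}) phi K
    (c : 'I_K.+1 -> R[i]) (m : int) :
  circ_integral t0 (hatmu mu phi) (fun z => spanfun t0 c z * hpow t0 m z) =
  cint mu (argI t0)
    (fun t => spanfun t0 c (expiC t) * hpow t0 m (expiC t) * (hatw phi t)%:C).
Proof.
have mI : measurable (argI t0) by exact: measurable_itv.
pose e := fun k : 'I_K.+1 => (k : nat)%:R + (m - K%:Z)%:~R / 2 : R.
rewrite /circ_integral (@eq_cint _ _ _ _ (trigsum c e)); last first.
  by move=> t /set_mem It; rewrite spanfun_hpow_expiC.
rewrite (@cint_density _ mu _ _ _ _ (@hatw_ge0 R phi) (measurable_hatw phi)) //.
- by apply: eq_cint => t /set_mem It; rewrite spanfun_hpow_expiC.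
- exact: measurable_Re_trigsum.
- under eq_fun do rewrite Im_trigsum; exact: measurable_Re_trigsum.
Qed.

End spanfun_on_circle.

Section Xpoly.
Variable R : realType.

Lemma sum_Xpoly M (d : 'I_M.+2 -> R[i]) x :
  \sum_(k < M.+2) d k * x ^+ k = (Xpoly d).[x].
Proof.
rewrite (@horner_coef_wide _ M.+2) ?size_poly //.
by apply: eq_bigr => k _; rewrite coef_poly ltn_ord inord_val.
Qed.

Lemma size_Xpoly_cofactor M (d : 'I_M.+2 -> R[i]) q a :
  Xpoly d = q * ('X - a%:P) ^+ 2 -> (size q <= M)%N.
Proof.
move=> d_factor; have [->|q_neq0] := eqVneq q 0; first by rewrite size_poly0.
have := size_poly M.+2 (fun k => d (inord k)); rewrite -/(Xpoly d) d_factor.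
rewrite size_mul ?size_exp_XsubC ?expf_neq0 ?polyXsubC_eq0 //.
by rewrite addnS /= addn2 !ltnS.
Qed.

Lemma Xpoly_eq0 t0 M (d : 'I_M.+2 -> R[i]) z : Xpoly d = 0 -> spanfun t0 d z = 0.
Proof.
move=> d0; rewrite /spanfun big1 // => k _.
have := coef_poly M.+2 (fun k => d (inord k)) k.
by rewrite ltn_ord inord_val -/(Xpoly d) d0 coef0 => <-; rewrite mul0r.
Qed.

End Xpoly.

Section hatw_identities.
Variable R : realType.
Implicit Types phi t : R.

Lemma hatwE phi t : (hatw phi t)%:C = 2 - expiC (t - phi) - expiC (phi - t).
Proof.
have cos_half a : cos a = 1 - 2 * sin (a / 2) ^+ 2.
  by rewrite {1}(splitr a) -mulr2n cos_mulr2n cos2sin2; ring.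
rewrite /hatw /expiC -[phi - t]opprB cosN sinN.
by apply/eqP; rewrite eq_complex /= cos_half; apply/andP; split; apply/eqP; ring.
Qed.

Lemma hatw_sqr phi t :
  expiC t * - expiC phi * (hatw phi t)%:C = (expiC t - expiC phi) ^+ 2.
Proof.
rewrite hatwE.
have t_phi : expiC t = expiC phi * expiC (t - phi) by rewrite expiCD subrKC.
have inv : expiC (phi - t) * expiC (t - phi) = 1 by rewrite expiCD subrKA subrr expiC0.
rewrite t_phi; set v := expiC phi; set w := expiC (t - phi).
transitivity ((v * w - v) ^+ 2 + v ^+ 2 * (expiC (phi - t) * w - 1)); first by ring.
by rewrite inv subrr mulr0 addr0.
Qed.

End hatw_identities.

Section double_root_on_circle.
Variables (R : realType) (t0 phi : R) (M : nat).
Variables (d : 'I_M.+2 -> R[i]) (q : {poly R[i]}).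
Hypothesis Xpoly_factor : Xpoly d = q * ('X - (expiC phi)%:P) ^+ 2.
Hypothesis size_q : (size q <= M)%N.

Local Notation y := (fun k : 'I_M.+1 => - expiC phi * q`_k).

Lemma hatw_cofactor_expiC (m : int) t : argI t0 t ->
  spanfun t0 y (expiC t) * hpow t0 m (expiC t) * (hatw phi t)%:C =
  spanfun t0 d (expiC t) * hpow t0 (m - 1) (expiC t).
Proof.
move=> It; rewrite !spanfun_hpow_expiC // !trigsum_shift sum_Xpoly Xpoly_factor.
under eq_bigr do rewrite -mulrA.
rewrite -mulr_sumr -(horner_coef_wide _ (leqW size_q)).
rewrite hornerM horner_exp hornerXsubC.
set u := expiC t; set b := ((m - 1 - M.+1%:Z)%:~R / 2).
have -> : ((m - M%:Z)%:~R / 2) = b + 1.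
  by rewrite /b !intrD !intrN -!pmulrn -addn1 natrD; field.
rewrite mulrDl mul1r -expiCD -/u -(hatw_sqr phi t) -/u.
by ring.
Qed.

Lemma circ_integral_hatmu_cofactor (mu : {measure set R -> \bar R}) (m : int) :
  circ_integral t0 (hatmu mu phi) (fun z => spanfun t0 y z * hpow t0 m z) =
  circ_integral t0 mu (fun z => spanfun t0 d z * hpow t0 (m - 1) z).
Proof.
rewrite circ_integral_hatmu; apply: eq_cint => t /set_mem It.
exact: hatw_cofactor_expiC.
Qed.

End double_root_on_circle.

Lemma phi_conditions_add (R : realType) (t0 : R) r
    (nu : 'I_r -> {measure set R -> \bar R}) (n : 'I_r -> nat)
    (c c' : 'I_(totn n).+1 -> R[i]) :
  (forall j, (nu j (argI t0) < +oo)%E) ->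
  phi_conditions t0 nu n c -> c' ord_max = 0 ->
  (forall j (l : 'I_(n j)), circ_integral t0 (nu j)
     (fun z => spanfun t0 c' z * hpow t0 ((n j)%:Z - (2 * l)%:Z) z) = 0) ->
  phi_conditions t0 nu n (fun k => c k + c' k).
Proof.
move=> nu_fin [c_max c_orth] c'_max c'_orth.
split; first by rewrite c_max c'_max addr0.
by move=> j l; rewrite circ_integral_spanfun_hpowD // c_orth c'_orth addr0.
Qed.

Theorem theorem4p2 (R : realType) (t0 : R) (r : nat)
  (mu : 'I_r -> {measure set R -> \bar R}) (n : 'I_r -> nat)
  (tau : R[i]) (d : 'I_(totn n).+2 -> R[i]) :
  (forall j, finite_meas (mu j)) ->
  (forall j, circle_measure t0 (mu j)) ->
  (forall j, infinite_support t0 (mu j)) ->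
  phi_normal t0 mu n ->
  `|tau| = 1 ->
  paraorthogonal t0 mu n tau d ->
  ~ (forall z : R[i], spanfun t0 d z = 0) ->
  (forall varphi : R, 0 <= varphi < 2 * pi ->
     forall nu : 'I_r -> {measure set R -> \bar R},
       (forall j (A : set R), measurable A ->
          nu j A = (\int[mu j]_(x in A) (hatw varphi x)%:E)%E) ->
       phi_normal t0 nu n) ->
  forall z : R[i], `|z| = 1 -> root (Xpoly d) z -> mup z (Xpoly d) = 1%N.
Proof.
move=> mu_fin _ _ _ _ [_ d_orth] d_neq0 hat_normal z z1 z_root.
have P_neq0 : Xpoly d != 0.
  by apply: contra_notN d_neq0 => /eqP P0 w; exact: Xpoly_eq0.
apply/eqP; rewrite eqn_leq mup_geq // expr1 dvdp_XsubCl z_root andbT leqNgt.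
rewrite mup_geq //; apply/negP => /dvdpP [q P_factor].
have q_neq0 : q != 0 by apply: contra_neq P_neq0 => q0; rewrite P_factor q0 mul0r.
have size_q := size_Xpoly_cofactor P_factor.
have [phi phi_range z_phi] : exists2 phi, 0 <= phi < 2 * pi & expiC phi = z.
  by apply: expiC_onto; case: z1.
subst z.
have [c [c_cond c_uniq]] :=
  hat_normal phi phi_range _ (fun j A _ => erefl : hatmu (mu j) phi A = _).
pose y k := - expiC phi * q`_k.
have /c_uniq y_cond :
    phi_conditions t0 (fun j => hatmu (mu j) phi) n (fun k => c k + y k).
  apply: phi_conditions_add => //.
  - by move=> j; apply: hatmu_lt_pinfty => //; exact: measurable_itv.
  - by rewrite /y nth_default ?mulr0.
  - move=> j l; rewrite /y (circ_integral_hatmu_cofactor _ P_factor) //.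
    by rewrite addrAC d_orth.
apply: (negP q_neq0); apply/eqP/polyP => k; rewrite coef0.
have [k_le|k_gt] := ltnP k (totn n).+1; last first.
  by rewrite nth_default // (leq_trans size_q (ltnW k_gt)).
have := y_cond (Ordinal k_le); rewrite /y /= -[RHS]addr0 => /addrI /eqP.
by rewrite mulf_eq0 oppr_eq0 (negbTE (expiC_neq0 _)) => /eqP.
Qed.
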